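(* Let $M$ be a Peano continuum with no cut points. Then: (1) every multivalent exact cut pair of $M$ is inseparable; (2) no cut pair of $M$ is separated by a multivalent exact cut pair, i.e., if $\{\sigma,\tau\}$ is a multivalent exact cut pair and $\{\zeta,\xi\}$ is any cut pair, then $\zeta$ and $\xi$ do not lie in distinct components of $M\setminus\{\sigma,\tau\}$.
   Context: A Peano continuum is a compact, connected, locally connected metrizable space. A cut point is $\eta$ with $M\setminus\{\eta\}$ disconnected. A cut pair is a set of two distinct points, neither a cut point, whose complement is disconnected. For a point $\zeta$ with $M\setminus\{\zeta\}$ connected, its valence is the number of ends of $M\setminus\{\zeta\}$. A cut pair $\{\zeta,\xi\}$ is exact if the valences of $\zeta$ and $\xi$ both equal $n$, where $n$ is the number of components of $M\setminus\{\zeta,\xi\}$; it is multivalent if this common valence is finite and at least $3$. An exact cut pair $\{\zeta,\xi\}$ is inseparable if $\zeta$ and $\xi$ do not lie in distinct components of the complement of any other exact cut pair. *)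

From HB Require Import structures.
From mathcomp Require Import all_boot all_order all_algebra.
From mathcomp Require Import all_classical all_reals topology.
Set Implicit Arguments. Unset Strict Implicit. Unset Printing Implicit Defensive.
Local Open Scope classical_set_scope.

Section PeanoDefs.
Context {M : topologicalType}.

Definition locally_connected_space : Prop :=
  forall (x : M) (U : set M), nbhs x U ->
    exists V : set M, [/\ open V, V x, connected V & V `<=` U].

(* Peano continuum (metrizability is provided by the ambient metricType) *)
Definition peano_continuum : Prop :=
  [/\ [set: M] !=set0, compact [set: M], connected [set: M] &
      locally_connected_space].

Definition cut_point (z : M) : Prop := ~ connected (~` [set z]).

Definition pair_compl (z x : M) : set M := ~` ([set z] `|` [set x]).

Definition cut_pair (z x : M) : Prop :=
  [/\ z <> x, ~ cut_point z, ~ cut_point x & ~ connected (pair_compl z x)].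

Definition components (A : set M) : set (set M) :=
  [set C | exists2 x, A x & C = connected_component A x].

(* compact subsets of M \ {z}, i.e. compact subsets of M avoiding z *)
Definition admissible (z : M) (K : set M) : Prop := compact K /\ ~ K z.

(* Freudenthal ends of M \ {z}: a choice, for each compact K of M \ {z},
   of a component of (M \ {z}) \ K, decreasing in K.  Off the admissible
   sets the function is normalised to set0, so ends are genuine functions. *)
Definition is_end (z : M) (e : set M -> set M) : Prop :=
  [/\ (forall K, admissible z K -> components (~` (K `|` [set z])) (e K)),
      (forall K L, admissible z K -> admissible z L -> K `<=` L -> e L `<=` e K)
    & (forall K, ~ admissible z K -> e K = set0)].

Definition ends (z : M) : set (set M -> set M) := [set e | is_end z e].

(* exact cut pair: both valences (numbers of ends) equal the number of
   components of M \ {z, x} (as cardinals) *)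
Definition exact_cut_pair (z x : M) : Prop :=
  [/\ cut_pair z x, (ends z #= components (pair_compl z x))%card
    & (ends x #= components (pair_compl z x))%card].

Definition multivalent_exact_cut_pair (z x : M) : Prop :=
  exact_cut_pair z x /\
  exists2 n : nat, (3 <= n)%N & (components (pair_compl z x) #= `I_n)%card.

Definition separates (s t z x : M) : Prop :=
  [/\ pair_compl s t z, pair_compl s t x &
      connected_component (pair_compl s t) z <>
      connected_component (pair_compl s t) x].

Definition inseparable (z x : M) : Prop :=
  exact_cut_pair z x /\
  forall s t : M, exact_cut_pair s t ->
    [set s] `|` [set t] <> [set z] `|` [set x] -> ~ separates s t z x.

End PeanoDefs.

From HB Require Import structures.
From mathcomp Require Import all_boot all_order all_algebra.
From mathcomp Require Import all_classical all_reals topology.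

(* Let {s, t} be a pair with at least three complementary components.  Since
   M has no cut points, the closure of every component C of M \ {s, t}
   contains both s and t, so C ∪ {s, t} is connected.
   (1) Whatever the pair {s', t'}, some component C avoids s' and t', and then
   C ∪ {s, t} joins s to t in M \ {s', t'}.
   (2) If {s, t} separates z from x, pick a component C of M \ {s, t} avoiding
   z and x.  Every component D of M \ {s, t, z, x} has s or t in its closure:
   otherwise D would be clopen in M \ {x} or in M \ {z} (making x or z a cut
   point), or its closure would contain both z and x, putting them in one
   component of M \ {s, t}.  Hence M \ {z, x} is the union of the connected
   sets C ∪ {s, t} ∪ D ∪ (cl D ∩ {s, t}), all containing s, so {z, x} is not
   a cut pair. *)

Local Open Scope classical_set_scope.

Lemma card_ge3_avoid2 {T : Type} {A : set T} {n : nat} :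
  (3 <= n)%N -> (A #= `I_n)%card ->
  forall a b : T, exists c, [/\ A c, c <> a & c <> b].
Proof.
move=> n3; rewrite card_eq_le => /andP[_ An] a b.
have /card_leP[f] : (`I_3 #<= A)%card.
  by apply: card_le_trans An; rewrite card_le_II.
pose g i (i3 : (i < 3)%N) : T := val (f (SigSub (mem_set (i3 : `I_3 i)))).
have g_inj i j i3 j3 : g i i3 = g j j3 -> i = j.
  by move=> /val_inj/(@inj _ _ _ f _ _ (mem_set I) (mem_set I))/(congr1 val).
apply: contrapT => /forallNP avoid.
have g_ab i i3 : g i i3 = a \/ g i i3 = b.
  apply: contrapT => /not_orP[ga gb]; apply: (avoid (g i i3)); split => //.
  exact: set_valP.
move: (g_inj 0 1 isT isT) (g_inj 0 2 isT isT) (g_inj 1 2 isT isT).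
case: (g_ab 0 isT) (g_ab 1 isT) (g_ab 2 isT) => -> [] -> [] -> h01 h02 h12;
  by [move: (h01 erefl) | move: (h02 erefl) | move: (h12 erefl)].
Qed.

Section Connectedness.
Context {T : topologicalType}.

Lemma connected_between (D B : set T) :
  connected D -> D `<=` B -> B `<=` closure D -> connected B.
Proof.
move=> cD DB Bcl; apply/connectedP => E [E0 BE [clE0E1 E0clE1]].
have DE : D `<=` E false `|` E true by rewrite -BE.
have [DE0|DE1] := connected_subset (conj clE0E1 E0clE1) DE cD.
- have [w E1w] := E0 true.
  have Bw : B w by rewrite BE; right.
  suff : (closure (E false) `&` E true) w by rewrite clE0E1.
  by split => //; apply: closureS DE0 _ (Bcl _ Bw).
- have [w E0w] := E0 false.
  have Bw : B w by rewrite BE; left.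
  suff : (E false `&` closure (E true)) w by rewrite E0clE1.
  by split => //; apply: closureS DE1 _ (Bcl _ Bw).
Qed.

Lemma components_connected_component {A C : set T} {w : T} :
  components A C -> C w -> C = connected_component A w.
Proof. by move=> [y Ay ->] /same_connected_component. Qed.

(* [D] is then a nonempty proper clopen subset of [T \ {p}]. *)
Lemma cut_point_clopen (D : set T) p q :
  open D -> D !=set0 -> ~ D p -> ~ D q -> q <> p ->
  closure D `<=` D `|` [set p] -> cut_point p.
Proof.
move=> oD D0 Dp Dq qp clD conn.
have Dsub : D `<=` ~` [set p] by move=> w Dw wp; apply: Dp; rewrite -wp.
suff DE : D = ~` [set p] by apply: Dq; rewrite DE.
apply: conn => //.
- exists D => //; apply/seteqP; split => [w Dw|w []//].
  by split => //; exact: Dsub.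
- exists (closure D); first exact: closed_closure.
  apply/seteqP; split => [w Dw|w [wp /clD[//|/wp[]]]].
  by split; [exact: Dsub | exact: subset_closure].
Qed.

Hypothesis lc : @locally_connected_space T.

Lemma open_connected_component {A : set T} {x : T} :
  open A -> open (connected_component A x).
Proof.
move=> oA; rewrite openE => y Dy.
have Ay : A y := connected_component_sub Dy.
have [V [oV Vy cV VA]] := lc _ _ (open_nbhs_nbhs (conj oA Ay)).
rewrite (same_connected_component Dy).
apply: filterS (open_nbhs_nbhs (conj oV Vy)).
exact: connected_component_max.
Qed.

Lemma closure_connected_component {A : set T} {x : T} :
  open A -> closure (connected_component A x) `&` A `<=` connected_component A x.
Proof.
move=> oA y [cly Ay].
have Dy : open_nbhs y (connected_component A y).
  by split; [exact: open_connected_component | exact: connected_component_refl].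
have [w [Dxw Dyw]] := cly _ (open_nbhs_nbhs Dy).
rewrite (same_connected_component Dxw) -(same_connected_component Dyw).
exact: connected_component_refl.
Qed.

End Connectedness.

Section NoCutPoints.
Context {M : topologicalType}.
Hypothesis lc : @locally_connected_space M.
Hypothesis nocut : forall z : M, ~ cut_point z.
Hypothesis closed_set1 : forall x : M, closed [set x].

Lemma open_pair_compl (a b : M) : open (pair_compl a b).
Proof. exact/closed_openC/closedU. Qed.

Lemma pair_complC (a b : M) : pair_compl a b = pair_compl b a.
Proof. by rewrite /pair_compl setUC. Qed.

Lemma closure_component_pair_compl_l {a b : M} {C : set M} :
  a <> b -> components (pair_compl a b) C -> closure C a.
Proof.
move=> ab cC; apply: contrapT => nCa; apply: (nocut b).
have [y Ay CE] := cC.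
have CA : C `<=` pair_compl a b by rewrite CE; exact: connected_component_sub.
apply: (@cut_point_clopen _ C b a).
- by rewrite CE; exact: (open_connected_component lc (open_pair_compl a b)).
- by exists y; rewrite CE; exact: connected_component_refl.
- by move=> /CA; apply; right.
- by move=> /CA; apply; left.
- exact: ab.
- move=> w clw; have [Aw|] := pselect (pair_compl a b w).
    left; rewrite CE.
    apply: (closure_connected_component lc (open_pair_compl a b)).
    by rewrite -CE; split.
  by move=> /contrapT[/= wa|/= wb]; [case: nCa; rewrite -wa | right].
Qed.

Lemma closure_component_pair_compl {a b : M} {C : set M} :
  a <> b -> components (pair_compl a b) C -> closure C a /\ closure C b.
Proof.
move=> ab cC; split; first exact: closure_component_pair_compl_l ab cC.
by apply: closure_component_pair_compl_l; [move=> /esym/ab | rewrite pair_complC].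
Qed.

Lemma connected_component_setU_pair {a b : M} {C : set M} :
  a <> b -> components (pair_compl a b) C -> connected (C `|` [set a; b]).
Proof.
move=> ab cC; have [cla clb] := closure_component_pair_compl ab cC.
have [y _ CE] := cC.
apply: (@connected_between _ C); first by rewrite CE; exact: component_connected.
  by move=> w Cw; left.
by move=> w [Cw|[/= ->|/= ->]] //; exact: subset_closure.
Qed.

Lemma component_avoiding_not_separates {a b s t : M} {C : set M} :
  a <> b -> components (pair_compl a b) C -> ~ C s -> ~ C t ->
  ~ separates s t a b.
Proof.
move=> ab cC Cs Ct [Pa Pb []]; apply: same_connected_component.
have CabP : C `|` [set a; b] `<=` pair_compl s t.
  move=> w [Cw [/= ws|/= wt]|[/= ->|/= ->] //].
  - by apply: Cs; rewrite -ws.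
  - by apply: Ct; rewrite -wt.
apply: (connected_component_max _ CabP (connected_component_setU_pair ab cC)).
- by right; left.
- by right; right.
Qed.

Section Separation.
Context {a b z x : M}.
Hypothesis ab : a <> b.
Hypothesis sep : separates a b z x.
Let A := pair_compl a b.
Let W := A `&` pair_compl z x.

Lemma closure_component_meets_pair y :
  W y -> closure (connected_component W y) `&` [set a; b] !=set0.
Proof.
have [Az Ax zx_sep] := sep.
move=> Wy; apply: contrapT => nmeet.
have oW : open W := openI (open_pair_compl a b) (open_pair_compl z x).
set D := connected_component W y.
have oD : open D := open_connected_component lc oW.
have DW : D `<=` W := @connected_component_sub _ W y.
have clD : closure D `<=` D `|` [set z; x].
  move=> w clw; have [Ww|nWw] := pselect (W w).
    by left; exact: (closure_connected_component lc oW _ (conj clw Ww)).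
  have [Aw|nAw] := pselect (A w).
    by right; apply: contrapT => zxw; apply: nWw.
  by case: nmeet; exists w; split => //; apply: contrapT.
have in_closure p q : [set z; x] = [set p; q] -> closure D p.
  move=> zxE; apply: contrapT => nclp; apply: (nocut q).
  have zxq : [set z; x] q by rewrite zxE; right.
  apply: (@cut_point_clopen _ D q a) => //.
  - by exists y; exact: connected_component_refl.
  - by move=> /DW[_ /(_ zxq)].
  - by move=> /DW[Aa _]; apply: Aa; left.
  - move=> aq; case: zxq => /= qE; [apply: Az|apply: Ax];
    by rewrite -qE -aq; left.
  - move=> w clw; case/clD: (clw) => [Dw|]; first by left.
    by rewrite zxE => -[/= wp|/= wq]; [case: nclp; rewrite -wp | right].
have DA : D `<=` connected_component A y.
  apply: connected_component_max; first exact: connected_component_refl.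
    by move=> w /DW[].
  exact: component_connected.
have compA p :
    A p -> closure D p -> connected_component A p = connected_component A y.
  move=> Ap /(closureS DA) clp; apply/esym; apply: same_connected_component.
  exact: (closure_connected_component lc (open_pair_compl a b) _ (conj clp Ap)).
have clz : closure D z := in_closure z x erefl.
have clx : closure D x by apply: (in_closure x z); rewrite setUC.
by apply: zx_sep; rewrite (compA z) ?(compA x).
Qed.

Lemma pair_compl_connected {C : set M} :
  components A C -> ~ C z -> ~ C x -> connected (pair_compl z x).
Proof.
have [Az Ax _] := sep.
move=> cC Cz Cx.
set S := pair_compl z x; set K := C `|` [set a; b].
have abS : [set a; b] `<=` S.
  by move=> w abw [/= wz|/= wx]; [apply: Az|apply: Ax]; rewrite -?wz -?wx.
have KS : K `<=` S.
  move=> w [Cw|/abS //] [/= wz|/= wx]; [apply: Cz|apply: Cx];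
  by rewrite -?wz -?wx.
have cK : connected K := connected_component_setU_pair ab cC.
pose E y := connected_component W y `|`
  (closure (connected_component W y) `&` [set a; b]).
have SE : S = \bigcup_(y in S) (K `|` E y).
  apply/seteqP; split => [w Sw|w [y Sy [/KS //|[Dw|[_ /abS //]]]]].
    exists w => //; have [Ww|nWw] := pselect (W w).
      by right; left; exact: connected_component_refl.
    by left; right; apply: contrapT => nabw; apply: nWw.
  by have [] := connected_component_sub Dw.
rewrite SE; apply: bigcup_connected.
  by exists a => y _; left; right; left.
move=> y Sy; have [Wy|nWy] := pselect (W y); last first.
  by rewrite /E connected_component_out // closure0 set0I !setU0.
have [w [clw abw]] := closure_component_meets_pair y Wy.
apply: connectedU => //; first by exists w; split; right.
apply: (@connected_between _ (connected_component W y)).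
- exact: component_connected.
- by move=> v Dv; left.
- by move=> v [Dv|[clv _]] //; exact: subset_closure.
Qed.

End Separation.
End NoCutPoints.

Lemma multivalent_component_avoid2 {M : topologicalType} {s t : M} (p q : M) :
  multivalent_exact_cut_pair s t ->
  exists2 C, components (pair_compl s t) C & ~ C p /\ ~ C q.
Proof.
move=> [_ [n n3 card]].
have [C [cC Cp Cq]] := card_ge3_avoid2 n3 card
  (connected_component (pair_compl s t) p)
  (connected_component (pair_compl s t) q).
by exists C => //; split => /(components_connected_component cC).
Qed.

Theorem lemma2p6 (R : realType) (M : metricType R) :
  @peano_continuum M -> (forall z : M, ~ cut_point z) ->
  (forall z x : M, multivalent_exact_cut_pair z x -> inseparable z x) /\
  (forall s t z x : M, multivalent_exact_cut_pair s t -> cut_pair z x ->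
     ~ separates s t z x).
Proof.
move=> [_ _ _ lc] nocut.
have closed_set1 : forall x : M, closed [set x] :=
  accessible_closed_set1 (hausdorff_accessible (@metric_hausdorff R M)).
split.
- move=> z x zx; have [[[zx_neq _ _ _] _ _] _] := zx.
  split; first by case: zx.
  move=> s t _ _; have [C cC [Cs Ct]] := multivalent_component_avoid2 s t zx.
  exact: (component_avoiding_not_separates lc nocut closed_set1 zx_neq cC Cs Ct).
- move=> s t z x st [_ _ _ zx_disconnected] sep; apply: zx_disconnected.
  have [[[st_neq _ _ _] _ _] _] := st.
  have [C cC [Cz Cx]] := multivalent_component_avoid2 z x st.
  exact: (pair_compl_connected lc nocut closed_set1 st_neq sep cC Cz Cx).
Qed.
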